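(* Let $T$ be a power bounded operator. Then $T\overset{d}{\prec} S$ if and only if the isometric asymptote of $T$ is not unitary.
   Context: $S$ denotes the simple unilateral shift, i.e. multiplication by the independent variable on the Hardy space $H^2$. For operators $T\in\mathcal L(\mathcal H)$, $R\in\mathcal L(\mathcal K)$, the notation $T\overset{d}{\prec} R$ means that there exists a transformation $X\in\mathcal L(\mathcal H,\mathcal K)$ with dense range such that $XT=RX$. An operator $T$ is power bounded if $\sup_{n\ge0}\|T^n\|<\infty$. For a power bounded operator $T$, the isometric asymptote $(X_{T,+},V)$ (in the sense of Kérchy) consists of an isometry $V$ and a canonical intertwining mapping $X_{T,+}$ realizing $T\overset{d}{\prec} V$, with the universality property that every intertwining of $T$ with an isometry factors through $X_{T,+}$; the isometry $V$ itself is also called the isometric asymptote of $T$. *)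

From mathcomp Require Import all_boot all_algebra.
From mathcomp Require Import reals complex.
Set Implicit Arguments. Unset Strict Implicit. Unset Printing Implicit Defensive.
Import GRing.Theory Num.Theory.
Local Open Scope ring_scope.
Local Open Scope complex_scope.

Record HilbertSpace (R : realType) := {
  hcarrier :> lmodType R[i];
  inner : hcarrier -> hcarrier -> R[i];
  inner_linear : forall (a : R[i]) (x y z : hcarrier),
      inner (a *: x + y) z = a * inner x z + inner y z;
  inner_conj : forall x y : hcarrier, inner x y = (inner y x)^*;
  inner_ge0 : forall x : hcarrier, 0 <= inner x x;
  inner_eq0 : forall x : hcarrier, inner x x = 0 -> x = 0;
  inner_complete : forall u : nat -> hcarrier,
      (forall eps : R, 0 < eps -> exists N : nat, forall m n : nat,
          (N <= m)%N -> (N <= n)%N ->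
          Num.sqrt (complex.Re (inner (u m - u n) (u m - u n))) < eps) ->
      exists x : hcarrier, forall eps : R, 0 < eps -> exists N : nat,
          forall n : nat, (N <= n)%N ->
          Num.sqrt (complex.Re (inner (u n - x) (u n - x))) < eps
}.

Section Ops.
Variable R : realType.

Definition hnorm (H : HilbertSpace R) (x : H) : R :=
  Num.sqrt (complex.Re (inner x x)).

Definition is_op (H K : HilbertSpace R) (X : H -> K) : Prop :=
  (forall (a : R[i]) (x y : H), X (a *: x + y) = a *: X x + X y) /\
  exists M : R, forall x : H, hnorm (X x) <= M * hnorm x.

Definition power_bounded (H : HilbertSpace R) (T : H -> H) : Prop :=
  is_op T /\ exists M : R, forall (n : nat) (x : H),
    hnorm (iter n T x) <= M * hnorm x.

Definition dense_range (H K : HilbertSpace R) (X : H -> K) : Prop :=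
  forall (y : K) (eps : R), 0 < eps -> exists x : H, hnorm (X x - y) < eps.

Definition intertwines (H K : HilbertSpace R) (X : H -> K)
    (T : H -> H) (Q : K -> K) : Prop :=
  forall x : H, X (T x) = Q (X x).

Definition dprec (H K : HilbertSpace R) (T : H -> H) (Q : K -> K) : Prop :=
  exists X : H -> K, is_op X /\ dense_range X /\ intertwines X T Q.

Definition isometry (H : HilbertSpace R) (V : H -> H) : Prop :=
  is_op V /\ forall x : H, hnorm (V x) = hnorm x.

Definition unitary (H : HilbertSpace R) (V : H -> H) : Prop :=
  isometry V /\ forall y : H, exists x : H, V x = y.

(* These are exactly the operators unitarily equivalent to multiplication
   by the variable on H^2. *)
Definition simple_unilateral_shift (L : HilbertSpace R) (S : L -> L) : Prop :=
  isometry S /\ exists e : L, hnorm e = 1 /\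
    (forall m n : nat, m <> n -> inner (iter m S e) (iter n S e) = 0) /\
    (forall (y : L) (eps : R), 0 < eps -> exists (n : nat) (c : 'I_n -> R[i]),
        hnorm ((\sum_(i < n) c i *: iter i S e) - y) < eps).

Definition isometric_asymptote (H K : HilbertSpace R) (T : H -> H)
    (X : H -> K) (V : K -> K) : Prop :=
  isometry V /\ is_op X /\ dense_range X /\ intertwines X T V /\
  forall (K' : HilbertSpace R) (W : K' -> K') (Y : H -> K'),
    isometry W -> is_op Y -> intertwines Y T W ->
    exists Z : K -> K', is_op Z /\ intertwines Z V W /\
      forall x : H, Y x = Z (X x).

End Ops.

(** If V is unitary, a dense-range intertwining Y of T with S factors as Y = Z X
    with Z V = S Z, so the range of Y lies in the range of S; but the range of S
    stays at distance 1 from the cyclic vector e of S, contradicting density.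
    If V is not unitary, its range is a proper closed subspace (V is an isometry
    on a complete space), so a nearest-point argument gives a unit vector u
    orthogonal to it.  Then (V^i u) is orthonormal, and k |-> sum_i <k, V^i u> S^i e
    is a contraction Y with Y V = S Y mapping V^i u to S^i e, hence with dense
    range; Y X realizes T ≺d S. *)

From Pilot Require Import Defs.
From mathcomp Require Import all_boot all_order all_algebra.
From mathcomp Require Import boolp classical_sets reals complex.
From mathcomp Require Import ring lra.
Set Implicit Arguments. Unset Strict Implicit. Unset Printing Implicit Defensive.
Import Order.TTheory GRing.Theory Num.Theory.
Local Open Scope ring_scope.
Local Open Scope complex_scope.

Lemma sum_nat_delta (V : nmodType) (F : nat -> V) j m n :
  \sum_(m <= i < n) (if i == j then F i else 0) = if (m <= j < n)%N then F j else 0.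
Proof.
rewrite -mem_index_iota; have : uniq (index_iota m n) := iota_uniq _ _.
elim: (index_iota m n) => [|i s IH]; first by rewrite big_nil.
rewrite big_cons in_cons /= => /andP[i_notin_s s_uniq]; rewrite IH //.
have [<-|_] := eqVneq i j; last by rewrite add0r.
by rewrite (negPf i_notin_s) addr0.
Qed.

Section Scalars.
Variable R : realType.
Implicit Types a b : R[i].

Definition sqmod a : R := complex.Re (a * a^*).

Lemma sqmod_ge0 a : 0 <= sqmod a.
Proof. by case: a => p q; rewrite /sqmod /=; nra. Qed.

Lemma sqmod_eq0 a : sqmod a = 0 -> a = 0.
Proof.
case: a => p q; rewrite /sqmod /= => sq0.
by apply/eqP; rewrite eq_complex /=; apply/andP; split; apply/eqP; nra.
Qed.

Lemma sqmodC (t : R) : sqmod t%:C = t ^+ 2.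
Proof. by rewrite /sqmod /=; ring. Qed.

Lemma ReJ a : complex.Re a^* = complex.Re a.
Proof. by case: a. Qed.

Lemma complexP a b :
  complex.Re a = complex.Re b -> complex.Im a = complex.Im b -> a = b.
Proof. by case: a b => ? ? [? ?] /= -> ->. Qed.

Lemma eventually_invSn_lt (d : R) : 0 < d ->
  exists N, forall n, (N <= n)%N -> n.+1%:R^-1 < d.
Proof.
move=> d_gt0; have [k] := ltr_add_invr d_gt0; rewrite add0r => ltk.
exists k => n kn; apply: le_lt_trans ltk.
by rewrite lef_pV2 ?posrE ?ltr0Sn // ler_nat.
Qed.

Lemma nondecreasing_bounded_cauchy (A : nat -> R) (B : R) :
  (forall n, A n <= A n.+1) -> (forall n, A n <= B) ->
  forall eps, 0 < eps ->
  exists N, forall m n, (N <= m)%N -> (m <= n)%N -> A n - A m < eps.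
Proof.
move=> A_incr A_le eps eps_gt0.
have supA : has_sup (range A) by split; [exists (A 0%N), 0%N | exists B => _ [n _ <-]].
have [_ [N _ <-] ltN] := sup_adherent eps_gt0 supA.
exists N => m n Nm mn.
have An_le : A n <= sup (range A) by apply: sup_upper_bound => //; exists n.
have := Order.NatMonotonyTheory.nondecnP A_incr _ _ Nm; lra.
Qed.

End Scalars.

Section InnerProduct.
Variables (R : realType) (H : HilbertSpace R).
Implicit Types (x y z : H) (a : R[i]).

Lemma innerDl x y z : inner (x + y) z = inner x z + inner y z.
Proof. by have := inner_linear 1 x y z; rewrite scale1r mul1r. Qed.

Lemma inner0l z : inner (0 : H) z = 0.
Proof. by apply: (addrI (inner (0 : H) z)); rewrite -innerDl !addr0. Qed.

Lemma innerZl a x z : inner (a *: x) z = a * inner x z.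
Proof. by have := inner_linear a x 0 z; rewrite addr0 inner0l addr0. Qed.

Lemma innerNl x z : inner (- x) z = - inner x z.
Proof. by rewrite -scaleN1r innerZl mulN1r. Qed.

Lemma innerBl x y z : inner (x - y) z = inner x z - inner y z.
Proof. by rewrite innerDl innerNl. Qed.

Lemma innerDr x y z : inner z (x + y) = inner z x + inner z y.
Proof. by rewrite inner_conj innerDl rmorphD !(inner_conj z). Qed.

Lemma innerZr a x z : inner z (a *: x) = a^* * inner z x.
Proof. by rewrite inner_conj innerZl rmorphM (inner_conj z). Qed.

Lemma inner0r z : inner z (0 : H) = 0.
Proof. by rewrite inner_conj inner0l conjc0. Qed.

Lemma innerNr x z : inner z (- x) = - inner z x.
Proof. by rewrite inner_conj innerNl rmorphN (inner_conj z). Qed.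

Lemma innerBr x y z : inner z (x - y) = inner z x - inner z y.
Proof. by rewrite innerDr innerNr. Qed.

Lemma inner_suml I (r : seq I) (P : pred I) (F : I -> H) z :
  inner (\sum_(i <- r | P i) F i) z = \sum_(i <- r | P i) inner (F i) z.
Proof. by elim/big_rec2: _ => [|i y1 y2 _ <-]; rewrite ?inner0l ?innerDl. Qed.

Definition hnorm2 x : R := complex.Re (inner x x).

Lemma inner_selfE x : inner x x = (hnorm2 x)%:C.
Proof.
have := inner_ge0 x; rewrite /hnorm2; case: (inner x x) => p q.
by rewrite lecE /= => /andP[/eqP -> _].
Qed.

Lemma hnorm2_ge0 x : 0 <= hnorm2 x.
Proof. by have := inner_ge0 x; rewrite inner_selfE ler0c. Qed.

Lemma hnorm_sqr x : hnorm x ^+ 2 = hnorm2 x.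
Proof. by rewrite sqr_sqrtr // hnorm2_ge0. Qed.

Lemma hnorm_ge0 x : 0 <= hnorm x.
Proof. exact: sqrtr_ge0. Qed.

Lemma hnorm_eq0 x : hnorm x = 0 -> x = 0.
Proof.
by move=> x0; apply: inner_eq0; rewrite inner_selfE -hnorm_sqr x0 expr0n.
Qed.

Lemma hnorm0 : hnorm (0 : H) = 0.
Proof. by rewrite /hnorm inner0l /= sqrtr0. Qed.

Lemma hnorm_le x (A : R) : 0 <= A -> hnorm2 x <= A ^+ 2 -> hnorm x <= A.
Proof. by rewrite -hnorm_sqr => A_ge0 le_sq; have := hnorm_ge0 x; nra. Qed.

Lemma hnorm_lt x (A : R) : 0 <= A -> hnorm2 x < A ^+ 2 -> hnorm x < A.
Proof. by rewrite -hnorm_sqr => A_ge0 lt_sq; have := hnorm_ge0 x; nra. Qed.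

Lemma hnorm2D x y : hnorm2 (x + y) = hnorm2 x + hnorm2 y + 2 * complex.Re (inner x y).
Proof. by rewrite /hnorm2 innerDl !innerDr (inner_conj y x) !raddfD /= ReJ; ring. Qed.

Lemma hnorm2N x : hnorm2 (- x) = hnorm2 x.
Proof. by rewrite /hnorm2 innerNl innerNr opprK. Qed.

Lemma hnorm2B x y : hnorm2 (x - y) = hnorm2 x + hnorm2 y - 2 * complex.Re (inner x y).
Proof. by rewrite hnorm2D hnorm2N innerNr raddfN /=; ring. Qed.

Lemma hnorm2_parallelogram x y :
  hnorm2 (x - y) + hnorm2 (x + y) = 2 * hnorm2 x + 2 * hnorm2 y.
Proof. by rewrite hnorm2B hnorm2D; ring. Qed.

Lemma hnorm_distC x y : hnorm (x - y) = hnorm (y - x).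
Proof. by rewrite /hnorm -/(hnorm2 _) -hnorm2N opprB. Qed.

Lemma hnorm2Z a x : hnorm2 (a *: x) = sqmod a * hnorm2 x.
Proof. by rewrite {1}/hnorm2 innerZl innerZr inner_selfE /sqmod; case: a => p q /=; ring. Qed.

Lemma hnormZ a x : hnorm (a *: x) = Num.sqrt (sqmod a) * hnorm x.
Proof. by rewrite /hnorm -/(hnorm2 _) hnorm2Z sqrtrM // sqmod_ge0. Qed.

Lemma Re_innerZr (t : R) x y :
  complex.Re (inner x (t%:C *: y)) = t * complex.Re (inner x y).
Proof. by rewrite innerZr; case: (inner x y) => p q /=; ring. Qed.

Lemma Re_innerZi x y : complex.Re (inner x ('i *: y)) = complex.Im (inner x y).
Proof. by rewrite innerZr; case: (inner x y) => p q /=; ring. Qed.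

Lemma Re_inner_le x y : complex.Re (inner x y) <= hnorm x * hnorm y.
Proof.
suff CS : complex.Re (inner x y) ^+ 2 <= hnorm2 x * hnorm2 y.
  have xy_ge0 : 0 <= hnorm x * hnorm y by rewrite mulr_ge0 ?hnorm_ge0.
  by rewrite -!hnorm_sqr -exprMn in CS; nra.
set c := complex.Re (inner x y).
have [y0|y_neq0] := eqVneq y 0.
  by rewrite /c y0 inner0r /hnorm2 inner0r /= expr0n /= mulr0.
have y_gt0 : 0 < hnorm2 y.
  rewrite lt_def hnorm2_ge0 andbT; apply: contra_neq y_neq0 => y2_0.
  by apply: hnorm_eq0; rewrite /hnorm -/(hnorm2 y) y2_0 sqrtr0.
have := hnorm2_ge0 (x - (c / hnorm2 y)%:C *: y).
rewrite hnorm2B hnorm2Z sqmodC Re_innerZr -/c => ge0.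
have cc : c * c = c / hnorm2 y * c * hnorm2 y by field; rewrite gt_eqF.
have c2 : c ^+ 2 = (c / hnorm2 y) ^+ 2 * hnorm2 y * hnorm2 y by field; rewrite gt_eqF.
nra.
Qed.

Lemma hnormD x y : hnorm (x + y) <= hnorm x + hnorm y.
Proof.
apply: hnorm_le; first by rewrite addr_ge0 ?hnorm_ge0.
by rewrite hnorm2D -!hnorm_sqr; have := Re_inner_le x y; nra.
Qed.

Lemma hnorm_distD x y z : hnorm (x - z) <= hnorm (x - y) + hnorm (y - z).
Proof. by have := hnormD (x - y) (y - z); rewrite addrA subrK. Qed.

End InnerProduct.

Section Operators.
Variables (R : realType) (H K : HilbertSpace R) (A : H -> K).
Hypothesis A_op : is_op A.
Implicit Types (x y : H) (a : R[i]).

Lemma is_opD x y : A (x + y) = A x + A y.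
Proof. by have := A_op.1 1 x y; rewrite !scale1r. Qed.

Lemma is_op0 : A 0 = 0.
Proof. by apply: (addrI (A 0)); rewrite -is_opD !addr0. Qed.

Lemma is_opZ a x : A (a *: x) = a *: A x.
Proof. by have := A_op.1 a x 0; rewrite !addr0 is_op0 addr0. Qed.

Lemma is_opB x y : A (x - y) = A x - A y.
Proof. by rewrite is_opD -scaleN1r is_opZ scaleN1r. Qed.

Lemma is_op_sum I (r : seq I) (P : pred I) (F : I -> H) :
  A (\sum_(i <- r | P i) F i) = \sum_(i <- r | P i) A (F i).
Proof. by elim/big_rec2: _ => [|i y1 y2 _ <-]; rewrite ?is_op0 ?is_opD. Qed.

Lemma is_op_bounded : exists2 M : R, 0 < M & forall x, hnorm (A x) <= M * hnorm x.
Proof.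
have [_ [M A_le]] := A_op; exists (`|M| + 1) => [|x]; first by rewrite ltr_pwDr.
apply: le_trans (A_le x) _; apply: ler_wpM2r; first exact: hnorm_ge0.
by apply: le_trans (ler_norm M) _; rewrite lerDl.
Qed.

End Operators.

Lemma is_op_comp (R : realType) (H K L : HilbertSpace R) (A : H -> K) (B : K -> L) :
  is_op A -> is_op B -> is_op (B \o A).
Proof.
move=> A_op B_op; split=> [a x y|] /=; first by rewrite A_op.1 B_op.1.
have [MA _ A_le] := is_op_bounded A_op; have [MB MB_gt0 B_le] := is_op_bounded B_op.
exists (MB * MA) => x; apply: le_trans (B_le _) _; rewrite -mulrA.
by rewrite ler_pM2l.
Qed.

Lemma dense_range_comp (R : realType) (H K L : HilbertSpace R) (A : H -> K) (B : K -> L) :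
  is_op B -> dense_range A -> dense_range B -> dense_range (B \o A).
Proof.
move=> B_op A_dense B_dense z eps eps_gt0.
have [M M_gt0 B_le] := is_op_bounded B_op.
have eps2_gt0 : 0 < eps / 2 by lra.
have [y Byz] := B_dense z _ eps2_gt0.
have [x Axy] := A_dense y _ (divr_gt0 eps2_gt0 M_gt0).
exists x => /=; have := hnorm_distD (B (A x)) (B y) z; rewrite -(is_opB B_op).
have : M * hnorm (A x - y) < eps / 2 by rewrite mulrC -ltr_pdivlMr.
have := B_le (A x - y); lra.
Qed.

Lemma dprec_trans (R : realType) (H K L : HilbertSpace R)
    (T : H -> H) (V : K -> K) (S : L -> L) :
  dprec T V -> dprec V S -> dprec T S.
Proof.
move=> [A [A_op [A_dense A_int]]] [B [B_op [B_dense B_int]]].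
exists (B \o A); split; first exact: is_op_comp.
by split=> [|x /=]; [exact: dense_range_comp | rewrite A_int B_int].
Qed.

Definition orthonormal (R : realType) (H : HilbertSpace R) (f : nat -> H) :=
  forall i j, inner (f i) (f j) = (i == j)%:R.

Lemma orthonormalP (R : realType) (H : HilbertSpace R) (f : nat -> H) :
  (forall i, hnorm (f i) = 1) -> (forall i j, i <> j -> inner (f i) (f j) = 0) ->
  orthonormal f.
Proof.
move=> f1 f_orth i j; have [<-|/eqP ij] := eqVneq i j; last exact: f_orth.
by rewrite inner_selfE -hnorm_sqr f1 expr1n.
Qed.

Section Isometry.
Variables (R : realType) (H : HilbertSpace R) (V : H -> H).
Hypothesis V_iso : Defs.isometry V.
Implicit Types (x y : H).

Lemma isometry_hnorm2 x : hnorm2 (V x) = hnorm2 x.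
Proof. by rewrite -!hnorm_sqr V_iso.2. Qed.

Lemma isometry_inner x y : inner (V x) (V y) = inner x y.
Proof.
have Re_eq u v : complex.Re (inner (V u) (V v)) = complex.Re (inner u v).
  have := isometry_hnorm2 (u + v).
  by rewrite (is_opD V_iso.1) !hnorm2D !isometry_hnorm2; lra.
apply: complexP; first exact: Re_eq.
by rewrite -!Re_innerZi -(is_opZ V_iso.1) Re_eq.
Qed.

Lemma isometry_iter_hnorm n x : hnorm (iter n V x) = hnorm x.
Proof. by elim: n => //= n <-; rewrite V_iso.2. Qed.

Lemma wandering_orthonormal u : hnorm u = 1 -> (forall x, inner (V x) u = 0) ->
  orthonormal (fun i => iter i V u).
Proof.
move=> u1 u_perp.
have orth_shift d i : inner (iter (d.+1 + i) V u) (iter i V u) = 0.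
  elim: i => [|i IH]; first by rewrite addn0 iterS u_perp.
  by rewrite addnS !iterS isometry_inner.
apply: orthonormalP => [i|i j /eqP]; first by rewrite isometry_iter_hnorm.
rewrite neq_ltn => /orP[ij|ji].
  by rewrite inner_conj -(subnK ij) -addSnnS orth_shift conjc0.
by rewrite -(subnK ji) -addSnnS orth_shift.
Qed.

End Isometry.

Section Convergence.
Variables (R : realType) (H : HilbertSpace R).
Implicit Types (u v : nat -> H) (x y : H).

Definition tends_to u x := forall eps : R, 0 < eps ->
  exists N, forall n, (N <= n)%N -> hnorm (u n - x) < eps.

Definition cauchy_seq u := forall eps : R, 0 < eps ->
  exists N, forall m n, (N <= m)%N -> (N <= n)%N -> hnorm (u m - u n) < eps.

Lemma cauchy_seq_tends_to u : cauchy_seq u -> exists x, tends_to u x.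
Proof. exact: inner_complete. Qed.

Lemma tends_to_unique u x y : tends_to u x -> tends_to u y -> x = y.
Proof.
move=> ux uy; apply/eqP; rewrite -subr_eq0; apply/eqP/hnorm_eq0/eqP.
rewrite eq_le hnorm_ge0 andbT; apply/ler_addgt0Pr => eps eps_gt0.
have eps2_gt0 : 0 < eps / 2 by lra.
have [N1 ux_close] := ux _ eps2_gt0; have [N2 uy_close] := uy _ eps2_gt0.
have := ux_close _ (leq_maxl N1 N2); have := uy_close _ (leq_maxr N1 N2).
have := hnorm_distD x (u (maxn N1 N2)) y; rewrite (hnorm_distC x (u _)); lra.
Qed.

Lemma tends_to_ext u v x : tends_to u x -> (forall n, u n = v n) -> tends_to v x.
Proof. by move=> ux uv eps /ux[N close]; exists N => n; rewrite -uv; apply: close. Qed.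

Lemma tends_to_shift u x : tends_to u x -> tends_to (fun n => u n.+1) x.
Proof. by move=> ux eps /ux[N close]; exists N => n Nn; apply/close/leqW. Qed.

Lemma tends_to_eventually u x N : (forall n, (N <= n)%N -> u n = x) -> tends_to u x.
Proof. by move=> ux eps eps_gt0; exists N => n /ux ->; rewrite subrr hnorm0. Qed.

Lemma tends_to_scaleD (a : R[i]) u v x y :
  tends_to u x -> tends_to v y -> tends_to (fun n => a *: u n + v n) (a *: x + y).
Proof.
move=> ux vy eps eps_gt0; set k := Num.sqrt (sqmod a).
have k_ge0 : 0 <= k by exact: sqrtr_ge0.
have eps2_gt0 : 0 < eps / 2 by lra.
have small_gt0 : 0 < eps / 2 / (k + 1) by rewrite divr_gt0 // ltr_pwDr.
have [N1 ux_close] := ux _ small_gt0.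
have [N2 vy_close] := vy _ eps2_gt0.
exists (maxn N1 N2) => n; rewrite geq_max => /andP[/ux_close un /vy_close vn].
have -> : a *: u n + v n - (a *: x + y) = a *: (u n - x) + (v n - y).
  by rewrite scalerBr addrACA opprD.
apply: le_lt_trans (hnormD _ _) _; rewrite hnormZ -/k.
have : k * hnorm (u n - x) <= (k + 1) * (eps / 2 / (k + 1)).
  by apply: ler_pM => //; [exact: hnorm_ge0 | rewrite lerDl | exact: ltW].
rewrite [(k + 1) * _]mulrC divfK ?gt_eqF ?ltr_pwDr //; lra.
Qed.

End Convergence.

Lemma tends_to_op (R : realType) (H K : HilbertSpace R) (A : H -> K) u x :
  is_op A -> tends_to u x -> tends_to (fun n => A (u n)) (A x).
Proof.
move=> A_op ux eps eps_gt0; have [M M_gt0 A_le] := is_op_bounded A_op.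
have [N close] := ux (eps / M) (divr_gt0 eps_gt0 M_gt0).
exists N => n /close lt; rewrite -(is_opB A_op); apply: le_lt_trans (A_le _) _.
by rewrite mulrC -ltr_pdivlMr.
Qed.

Section OrthonormalSums.
Variables (R : realType) (H : HilbertSpace R) (f : nat -> H).
Implicit Types (a b : nat -> R[i]) (k : H).

Definition osum a m n : H := \sum_(m <= i < n) a i *: f i.

Definition fourier k i := inner k (f i).

Lemma osum_sub a m n : (m <= n)%N -> osum a 0 n - osum a 0 m = osum a m n.
Proof. by move=> mn; rewrite /osum (big_cat_nat (leq0n m) mn) /= addrAC subrr add0r. Qed.

Lemma osum_delta j m n :
  osum (fun i => (j == i)%:R) m n = if (m <= j < n)%N then f j else 0.
Proof.
rewrite -sum_nat_delta; apply: eq_bigr => i _.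
by rewrite eq_sym; case: eqP => _; rewrite ?scale1r ?scale0r.
Qed.

Lemma inner_osuml a m n k :
  inner (osum a m n) k = \sum_(m <= i < n) a i * (fourier k i)^*.
Proof. by rewrite inner_suml; apply: eq_bigr => i _; rewrite innerZl inner_conj. Qed.

Hypothesis f_on : orthonormal f.

Lemma fourier_osum a m n j : fourier (osum a m n) j = if (m <= j < n)%N then a j else 0.
Proof.
rewrite /fourier inner_suml -sum_nat_delta; apply: eq_bigr => i _.
by rewrite innerZl f_on; case: eqP => _; rewrite ?mulr1 ?mulr0.
Qed.

Lemma inner_osum a b m n :
  inner (osum a m n) (osum b m n) = \sum_(m <= i < n) a i * (b i)^*.
Proof. by rewrite inner_osuml; apply: eq_big_nat => i mn; rewrite fourier_osum mn. Qed.

Lemma hnorm2_osum a m n : hnorm2 (osum a m n) = \sum_(m <= i < n) sqmod (a i).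
Proof. by rewrite /hnorm2 inner_osum raddf_sum. Qed.

Lemma bessel k n : \sum_(0 <= i < n) sqmod (fourier k i) <= hnorm2 k.
Proof.
have := hnorm2_ge0 (k - osum (fourier k) 0 n).
have -> : hnorm2 (k - osum (fourier k) 0 n) =
    hnorm2 k - \sum_(0 <= i < n) sqmod (fourier k i).
  rewrite /hnorm2 innerBl !innerBr (inner_conj k (osum _ _ _)) inner_osuml inner_osum.
  by rewrite !raddfB /= ReJ raddf_sum /sqmod; ring.
by rewrite subr_ge0.
Qed.

End OrthonormalSums.

Section OrthonormalTransfer.
Variables (R : realType) (H L : HilbertSpace R) (f : nat -> H) (g : nat -> L).
Hypotheses (f_on : orthonormal f) (g_on : orthonormal g).
Implicit Types (k : H).

Definition transfer_psum k n : L := osum g (fourier f k) 0 n.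

Lemma transfer_psum_cauchy k : cauchy_seq (transfer_psum k).
Proof.
move=> eps eps_gt0.
pose A n := \sum_(0 <= i < n) sqmod (fourier f k i).
have A_incr n : A n <= A n.+1 by rewrite /A big_nat_recr //= lerDl sqmod_ge0.
have [N A_cauchy] := nondecreasing_bounded_cauchy A_incr (bessel f_on k)
  (exprn_gt0 2 eps_gt0).
suff close m n : (N <= m)%N -> (m <= n)%N ->
    hnorm (transfer_psum k n - transfer_psum k m) < eps.
  exists N => m n Nm Nn; have [mn|/ltnW nm] := leqP m n; last exact: close.
  by rewrite hnorm_distC; apply: close.
move=> Nm mn; apply: hnorm_lt; first exact: ltW.
rewrite /transfer_psum osum_sub // hnorm2_osum //.
by have := A_cauchy m n Nm mn; rewrite /A (big_cat_nat (leq0n m) mn) /= addrAC subrr add0r.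
Qed.

Definition transfer k : L := projT1 (cid (cauchy_seq_tends_to (transfer_psum_cauchy k))).

Lemma transferP k : tends_to (transfer_psum k) (transfer k).
Proof. exact: projT2 (cid _). Qed.

Lemma transfer_psum_bounded k n : hnorm (transfer_psum k n) <= hnorm k.
Proof.
apply: hnorm_le; first exact: hnorm_ge0.
by rewrite hnorm_sqr /transfer_psum hnorm2_osum //; apply: bessel.
Qed.

Lemma transfer_contraction k : hnorm (transfer k) <= hnorm k.
Proof.
apply/ler_addgt0Pr => eps /(transferP k)[N /(_ N (leqnn N)) close].
have := hnormD (transfer k - transfer_psum k N) (transfer_psum k N).
rewrite subrK hnorm_distC; have := transfer_psum_bounded k N; lra.
Qed.

Lemma transfer_op : is_op transfer.
Proof.
split=> [a x y|]; last by exists 1 => k; rewrite mul1r transfer_contraction.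
apply: tends_to_unique (transferP _) _.
apply: (tends_to_ext (tends_to_scaleD a (transferP x) (transferP y)) _) => n.
rewrite /transfer_psum /osum scaler_sumr -big_split; apply: eq_bigr => i _ /=.
by rewrite /fourier innerDl innerZl scalerDl scalerA.
Qed.

Lemma transfer_orthonormal m : transfer (f m) = g m.
Proof.
apply: tends_to_unique (transferP _) (tends_to_eventually (N := m.+1) _) => n mn.
rewrite /transfer_psum.
under [fourier f (f m)]funext do rewrite /fourier f_on.
by rewrite osum_delta mn.
Qed.

Lemma transfer_dense :
  (forall (y : L) (eps : R), 0 < eps -> exists (n : nat) (c : 'I_n -> R[i]),
     hnorm ((\sum_(i < n) c i *: g i) - y) < eps) ->
  dense_range transfer.
Proof.
move=> g_span y eps /(g_span y)[n [c close]].
exists (\sum_(i < n) c i *: f i); rewrite (is_op_sum transfer_op).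
by under eq_bigr do rewrite (is_opZ transfer_op) transfer_orthonormal.
Qed.

Variables (V : H -> H) (S : L -> L).
Hypotheses (V_iso : Defs.isometry V) (S_op : is_op S).
Hypotheses (fS : forall i, f i.+1 = V (f i)) (gS : forall i, g i.+1 = S (g i)).
Hypothesis f0_perp : forall k, inner (V k) (f 0) = 0.

Lemma transfer_psumS k n : transfer_psum (V k) n.+1 = S (transfer_psum k n).
Proof.
rewrite /transfer_psum /osum big_nat_recl // {1}/fourier f0_perp scale0r add0r.
rewrite (is_op_sum S_op); apply: eq_bigr => i _.
by rewrite (is_opZ S_op) /fourier fS gS isometry_inner.
Qed.

Lemma transfer_intertwines : intertwines transfer V S.
Proof.
move=> k; apply: tends_to_unique (tends_to_shift (transferP (V k))) _.
apply: (tends_to_ext (tends_to_op S_op (transferP k)) _) => n.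
by rewrite transfer_psumS.
Qed.

End OrthonormalTransfer.

Lemma shift_range_far (R : realType) (L : HilbertSpace R) (S : L -> L) :
  simple_unilateral_shift S -> exists e : L, forall w, 1 <= hnorm (S w - e).
Proof.
move=> [S_iso [e [e1 [e_orth e_span]]]]; exists e => w.
apply/ler_addgt0Pr => eps /(e_span w)[n [c close]].
set p := \sum_(i < n) _ in close.
have Sp_perp : inner (S p) e = 0.
  rewrite /p (is_op_sum S_iso.1) inner_suml big1 // => i _.
  by rewrite (is_opZ S_iso.1) innerZl (e_orth i.+1 0%N) ?mulr0.
have Sp_far : 1 <= hnorm (S p - e).
  have := hnorm_sqr (S p - e); rewrite hnorm2B Sp_perp -(hnorm_sqr e) e1 /=.
  by have := hnorm2_ge0 (S p); have := hnorm_ge0 (S p - e); nra.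
have := hnorm_distD (S p) (S w) e; rewrite -(is_opB S_iso.1) S_iso.2; lra.
Qed.

Lemma minimal_orthogonal (R : realType) (H : HilbertSpace R) (w v : H) :
  (forall t : R[i], hnorm w <= hnorm (w - t *: v)) -> inner v w = 0.
Proof.
move=> w_min; set c := inner v w; pose s := (hnorm2 v + 1)^-1.
have v_ge0 := hnorm2_ge0 v.
have s_gt0 : 0 < s by rewrite invr_gt0; lra.
have sv_lt1 : s * hnorm2 v < 1 by rewrite mulrC ltr_pdivrMr; lra.
(* moving w by t v with t = s c^* would strictly decrease |w| unless c = 0 *)
have step : hnorm2 (w - (s%:C * c^*) *: v) =
    hnorm2 w - sqmod c * (s * (2 - s * hnorm2 v)).
  rewrite hnorm2B hnorm2Z innerZr (inner_conj w v) -/c /sqmod.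
  by case: c => p q /=; ring.
have decrease_gt0 : 0 < s * (2 - s * hnorm2 v) by rewrite mulr_gt0 //; lra.
have : hnorm2 w <= hnorm2 (w - (s%:C * c^*) *: v).
  by rewrite -!hnorm_sqr; have := w_min (s%:C * c^*); have := hnorm_ge0 w; nra.
rewrite step => le2; apply/sqmod_eq0/eqP; rewrite eq_le sqmod_ge0 andbT; nra.
Qed.

Section NearestPoint.
Variables (R : realType) (K : HilbertSpace R) (V : K -> K) (y : K).
Hypotheses (V_iso : Defs.isometry V) (y_notin_range : forall x, V x <> y).

Let dist x := hnorm (y - V x).
Let d := inf (range dist).

Let has_inf_dist : has_inf (range dist).
Proof. by split; [exists (dist 0), 0 | exists 0 => _ [x _ <-]; exact: hnorm_ge0]. Qed.

Let d_le x : d <= dist x.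
Proof. by apply: ge_inf; [exact: has_inf_dist.2 | exists x]. Qed.

Let d_ge0 : 0 <= d.
Proof. by apply: lb_le_inf; [exact: has_inf_dist.1 | move=> _ [x _ <-]; exact: hnorm_ge0]. Qed.

Let near_exists n : exists x, dist x < d + n.+1%:R^-1.
Proof.
have inv_gt0 : 0 < n.+1%:R^-1 :> R by rewrite invr_gt0 ltr0Sn.
by have [_ [x _ <-] lt] := inf_adherent inv_gt0 has_inf_dist; exists x.
Qed.

Let near n := projT1 (cid (near_exists n)).

Let nearP n : dist (near n) < d + n.+1%:R^-1.
Proof. exact: projT2 (cid (near_exists n)). Qed.

Let hnorm2_near n : hnorm2 (y - V (near n)) < d ^+ 2 + (2 * d + 1) * n.+1%:R^-1.
Proof.
have inv_gt0 : 0 < n.+1%:R^-1 :> R by rewrite invr_gt0 ltr0Sn.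
have inv_le1 : n.+1%:R^-1 <= 1 :> R by rewrite invf_le1 ?ltr0Sn // ler1n.
move: (nearP n) (hnorm_ge0 (y - V (near n))) inv_gt0 inv_le1 d_ge0.
rewrite /dist -hnorm_sqr; set h := hnorm _; set i := n.+1%:R^-1 => h_lt *.
have : h ^+ 2 < (d + i) ^+ 2 by rewrite ltr_pXn2r // nnegrE; lra.
nra.
Qed.

Let mid_point x x' :
  (y - V x) + (y - V x') = (2 : R)%:C *: (y - V ((2^-1 : R)%:C *: (x + x'))).
Proof.
rewrite (is_opZ V_iso.1) (is_opD V_iso.1) scalerBr scalerA -rmorphM /= divff ?pnatr_eq0 //.
have -> : (2 : R)%:C = 1 + 1 by apply: complexP => /=; ring.
by rewrite scale1r scalerDl scale1r opprD addrACA.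
Qed.

Let d_sqr_le x : d ^+ 2 <= hnorm2 (y - V x).
Proof. by rewrite -hnorm_sqr ler_pXn2r ?nnegrE ?hnorm_ge0 //; apply: d_le. Qed.

Let hnorm2_near_sub m n :
  hnorm2 (near m - near n) < 2 * (2 * d + 1) * (m.+1%:R^-1 + n.+1%:R^-1).
Proof.
have := hnorm2_parallelogram (y - V (near m)) (y - V (near n)).
have -> : y - V (near m) - (y - V (near n)) = - (V (near m) - V (near n)).
  by rewrite addrAC opprB subrKC opprB.
rewrite mid_point hnorm2N hnorm2Z sqmodC -(is_opB V_iso.1) isometry_hnorm2 //.
have := d_sqr_le ((2^-1 : R)%:C *: (near m + near n)).
have := hnorm2_near m; have := hnorm2_near n.
set inv_m := m.+1%:R^-1; set inv_n := n.+1%:R^-1; lra.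
Qed.

Let near_cauchy : cauchy_seq near.
Proof.
move=> eps eps_gt0; have c_gt0 : 0 < 4 * (2 * d + 1) by have := d_ge0; lra.
have [N small] := eventually_invSn_lt (divr_gt0 (exprn_gt0 2 eps_gt0) c_gt0).
exists N => m n /small + /small; rewrite !ltr_pdivlMr // => m_small n_small.
apply: hnorm_lt (ltW eps_gt0) (lt_le_trans (hnorm2_near_sub m n) _).
by move: m_small n_small; set inv_m := m.+1%:R^-1; set inv_n := n.+1%:R^-1; lra.
Qed.

Let nearest_point : exists x, forall z, dist x <= hnorm (y - V x - V z).
Proof.
have [x near_x] := cauchy_seq_tends_to near_cauchy; exists x => z.
suff dist_le : dist x <= d.
  by move: dist_le (d_le (x + z)); rewrite /dist (is_opD V_iso.1) opprD addrA; lra.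
apply/ler_addgt0Pr => eps eps_gt0; have eps2_gt0 : 0 < eps / 2 by lra.
have [N1 close] := near_x _ eps2_gt0; have [N2 small] := eventually_invSn_lt eps2_gt0.
move: (close _ (leq_maxl N1 N2)) (small _ (leq_maxr N1 N2)) (nearP (maxn N1 N2)).
have := hnorm_distD y (V (near (maxn N1 N2))) (V x).
by rewrite -(is_opB V_iso.1) V_iso.2 /dist; set inv := (maxn N1 N2).+1%:R^-1; lra.
Qed.

Lemma isometry_orthogonal_unit : exists u, hnorm u = 1 /\ forall z, inner (V z) u = 0.
Proof.
have [x x_min] := nearest_point; set w := y - V x in x_min.
have w_perp z : inner (V z) w = 0.
  by apply: minimal_orthogonal => t; rewrite -(is_opZ V_iso.1); apply: x_min.
have w_gt0 : 0 < hnorm w.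
  rewrite lt_def hnorm_ge0 andbT; apply/eqP => /hnorm_eq0/eqP.
  by rewrite subr_eq0 => /eqP/esym; apply: y_notin_range.
exists ((hnorm w)^-1%:C *: w); split=> [|z]; last by rewrite innerZr w_perp mulr0.
by rewrite hnormZ sqmodC sqrtr_sqr gtr0_norm ?invr_gt0 // mulVf ?gt_eqF.
Qed.

End NearestPoint.

Lemma wandering_dprec_shift (R : realType) (K L : HilbertSpace R)
    (V : K -> K) (S : L -> L) (u : K) :
  Defs.isometry V -> hnorm u = 1 -> (forall z, inner (V z) u = 0) ->
  simple_unilateral_shift S -> dprec V S.
Proof.
move=> V_iso u1 u_perp [S_iso [e [e1 [e_orth e_span]]]].
have f_on := wandering_orthonormal V_iso u1 u_perp.
have g_on : orthonormal (fun i => iter i S e).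
  by apply: orthonormalP => // i; rewrite isometry_iter_hnorm.
exists (transfer f_on g_on); split; first exact: transfer_op.
split; first exact: transfer_dense.
exact: transfer_intertwines V_iso S_iso.1 (fun i => erefl) (fun i => erefl) u_perp.
Qed.

Theorem lemma2p1 (R : realType) (H K L : HilbertSpace R) (T : H -> H)
    (X : H -> K) (V : K -> K) (S : L -> L) :
  power_bounded T ->
  isometric_asymptote T X V ->
  simple_unilateral_shift S ->
  (dprec T S <-> ~ unitary V).
Proof.
(* Power boundedness only guarantees that an isometric asymptote exists. *)
move=> _ [V_iso [X_op [X_dense [X_int X_universal]]]] S_shift; split.
- move=> [Y [Y_op [Y_dense Y_int]]] [_ V_onto].
  have [Z [_ [Z_int Y_factor]]] := X_universal L S Y S_shift.1 Y_op Y_int.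
  have [e e_far] := shift_range_far S_shift.
  have [x Yx_close] := Y_dense e 1 ltr01.
  have [k Vk] := V_onto (X x).
  by have := e_far (Z k); rewrite -Z_int Vk -Y_factor; lra.
- move=> V_not_unitary.
  have [y y_notin_range] : exists y, forall x, V x <> y.
    apply: contrapT => V_onto; apply: V_not_unitary; split=> // y.
    by apply: contrapT => no_x; apply: V_onto; exists y => x Vx; apply: no_x; exists x.
  have [u [u1 u_perp]] := isometry_orthogonal_unit V_iso y_notin_range.
  apply: dprec_trans (wandering_dprec_shift V_iso u1 u_perp S_shift).
  by exists X.
Qed.
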